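(* Let $X$ be the dihedral quandle $R_n$. (1) If $n$ is odd, the identity map is the only good involution of $X$. (2) If $n=2m$ with $m$ odd, a good involution of $X$ is either the identity map or the antipodal map. (3) If $n=2m$ with $m$ even, there are exactly four good involutions: the identity map, the antipodal map and the two half-antipodal maps.
   Context: A quandle is a set $X$ with a binary operation $(x,y)\mapsto x^y$ such that $x^x=x$; for all $x,y$ there is a unique $z$ with $z^y=x$ (written $x^{y^{-1}}$); and $(x^y)^z=(x^z)^{(y^z)}$. A good involution of $X$ is a map $\rho:X\to X$ with $\rho\circ\rho={\rm id}$, $\rho(x^y)=\rho(x)^y$ and $x^{\rho(y)}=x^{y^{-1}}$ for all $x,y$. The dihedral quandle $R_n$ is $\mathbb{Z}/n\mathbb{Z}$ with $x^y=2y-x \pmod n$. For $n=2m$, the antipodal map is $i\mapsto i+m$. For $n=2m$ with $m$ even, the half-antipodal maps are $\rho_1$ with $\rho_1(i)=i$ for odd $i$ and $\rho_1(i)=i+m$ for even $i$, and $\rho_2$ with $\rho_2(i)=i+m$ for odd $i$ and $\rho_2(i)=i$ for even $i$ (parity is well defined since $n$ is even). *)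

From HB Require Import structures.
From mathcomp Require Import all_boot all_order all_algebra.
Set Implicit Arguments. Unset Strict Implicit. Unset Printing Implicit Defensive.
Import GRing.Theory.
Local Open Scope ring_scope.

(* The dihedral quandle R_N with N = n.+1 >= 1 : carrier Z/NZ represented by
   'I_n.+1 (with its Zp additive group), operation x^y = 2y - x. *)
Definition dih_op (n : nat) (x y : 'I_n.+1) : 'I_n.+1 := y + y - x.

(* Good involution of a quandle (X, op).  x^{y^{-1}} is the unique z with
   z^y = x; so "x^{rho y} = x^{y^{-1}}" is written "(x^{rho y})^y = x". *)
Definition good_involution (X : Type) (op : X -> X -> X) (rho : X -> X) : Prop :=
  [/\ forall x, rho (rho x) = x,
      forall x y, rho (op x y) = op (rho x) y &
      forall x y, op (op x (rho y)) y = x].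

Definition antipodal (n m : nat) (i : 'I_n.+1) : 'I_n.+1 := i + inZp m.

(* half-antipodal maps (parity of the representative in {0,...,n}) *)
Definition half_antipodal1 (n m : nat) (i : 'I_n.+1) : 'I_n.+1 :=
  if odd i then i else i + inZp m.
Definition half_antipodal2 (n m : nat) (i : 'I_n.+1) : 'I_n.+1 :=
  if odd i then i + inZp m else i.
Arguments antipodal n m i : clear implicits.
Arguments half_antipodal1 n m i : clear implicits.
Arguments half_antipodal2 n m i : clear implicits.
Arguments dih_op n x y : clear implicits.

From mathcomp Require Import all_boot all_order all_algebra zify.
Import GRing.Theory.

(* Write a good involution as rho x = x + e x.  The axioms say exactly that
   e takes values of order at most 2 and is invariant under every reflection
   x |-> 2y - x (together with e (x + e x) = e x).  Reflections act
   transitively on Z/NZ when N is odd and preserve parity when N is even, so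
   e is constant, resp. depends only on the parity of x; since the only
   elements of order at most 2 are 0 (N odd), resp. 0 and m (N = 2m), this
   leaves the identity, resp. the four maps x |-> x + (0 or m according to
   parity).  The two mixed ones fail to be involutions exactly when m is odd,
   since then adding m changes parity. *)

Section DihedralQuandle.
Context {n : nat}.
Local Notation I := 'I_n.+1.

Lemma val_inZp_small k : k < n.+1 -> val (inZp k : I) = k.
Proof. exact: modn_small. Qed.

Lemma odd_addZp (x y : I) : ~~ odd n.+1 -> odd (x + y)%R = odd x (+) odd y.
Proof. by move=> ev; rewrite /= odd_mod ?oddD //; apply/negbTE. Qed.

Lemma odd_reflectZp (x y : I) : ~~ odd n.+1 -> odd (y + y - x)%R = odd x.
Proof.
move=> ev; have := odd_addZp (y + y - x)%R x ev.
rewrite subrK (odd_addZp y y ev) addbb.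
by case: (odd x); case: (odd (y + y - x)%R).
Qed.

Lemma double_eq0_odd {z : I} : odd n.+1 -> (z + z = 0)%R -> z = 0%R.
Proof.
move=> odd_N /(congr1 val) /= z2; apply: val_inj => /=; move: z2.
have z_lt := ltn_ord z; have [zz_lt | zz_ge] := ltnP (z + z) n.+1.
  by rewrite modn_small //; lia.
have -> : z + z = (z + z - n.+1) + n.+1 by lia.
rewrite modnDr modn_small; last lia.
move=> zz; have : odd (z + z) by have -> : z + z = n.+1 by lia.
by rewrite addnn odd_double.
Qed.

Section EvenOrder.
Context {m : nat}.
Hypothesis N_eq : n.+1 = m.*2.

Let m_lt : m < n.+1. Proof. by move: N_eq; rewrite -addnn; lia. Qed.

Lemma even_order : ~~ odd n.+1.
Proof. by rewrite N_eq odd_double. Qed.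

Lemma val_half : val (inZp m : I) = m.
Proof. exact: val_inZp_small. Qed.

Lemma double_half : (inZp m + inZp m : I)%R = 0%R.
Proof. by apply: val_inj; rewrite /= (modn_small m_lt) addnn -N_eq modnn. Qed.

Lemma half_neq0 : (inZp m : I) != 0%R.
Proof. by apply/eqP => /(congr1 val); rewrite val_half /=; move: N_eq; lia. Qed.

Lemma addr_half_neq (x : I) : (x + inZp m)%R != x.
Proof. by rewrite -subr_eq0 addrC addKr half_neq0. Qed.

Lemma double_eq0_even {z : I} : (z + z = 0)%R -> z = 0%R \/ z = inZp m.
Proof.
move=> /(congr1 val) /= z2; have z_lt := ltn_ord z; move: z2.
have [zz_lt | zz_ge] := ltnP (z + z) n.+1.
  by rewrite modn_small // => zz; left; apply: val_inj => /=; lia.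
have -> : z + z = (z + z - n.+1) + n.+1 by lia.
rewrite modnDr modn_small; last lia.
move=> zz; right; apply: val_inj; rewrite val_half /=; move: N_eq; lia.
Qed.

End EvenOrder.

Lemma parity_split (x : I) : x = (inZp x./2 + inZp x./2 - - inZp (odd x) : I)%R.
Proof.
rewrite opprK; apply: val_inj => /=; rewrite !modnDm.
have x_eq : (x./2 + x./2 + odd x)%N = x by have := odd_double_half x; rewrite -addnn; lia.
have x2_lt : x./2 < n.+1 by have := ltn_ord x; lia.
by rewrite (modn_small x2_lt) x_eq modn_small.
Qed.

(* Every x is a reflection of 0 or of 1. *)
Lemma reflect_invariant_parity (e : I -> I) :
  (forall x y, e (y + y - x) = e x)%R -> forall x, e x = e (inZp (odd x)).
Proof.
move=> e_refl x; rewrite [in LHS](parity_split x) e_refl.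
by have := e_refl (inZp (odd x)) 0%R; rewrite addr0 sub0r.
Qed.

Lemma good_involution_ext {rho sigma : I -> I} :
  rho =1 sigma -> good_involution (dih_op n) sigma -> good_involution (dih_op n) rho.
Proof. by move=> eq_rs [? ? ?]; split=> *; rewrite !eq_rs. Qed.

Lemma good_involution_shift (e : I -> I) :
  (forall x, e x + e x = 0)%R -> (forall x y, e (y + y - x) = e x)%R ->
  (forall x, e (x + e x) = e x)%R -> good_involution (dih_op n) (fun x => x + e x)%R.
Proof.
move=> e2 e_refl e_shift; have oppe x : (- e x = e x)%R.
  by apply/eqP; rewrite eq_sym -addr_eq0 e2.
split=> [x | x y | x y]; rewrite /dih_op.
- by rewrite e_shift -addrA e2 addr0.
- by rewrite e_refl opprD oppe addrA.
- by rewrite addrACA e2 addr0 opprB addrC subrK.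
Qed.

Lemma good_involution_translate (c : I) :
  (c + c = 0)%R -> good_involution (dih_op n) (fun x => x + c)%R.
Proof. by move=> c2; apply: (@good_involution_shift (fun=> c)). Qed.

Lemma good_involution_id : good_involution (dih_op n) id.
Proof.
apply: (@good_involution_ext _ (fun x => x + 0)%R); first by move=> x; rewrite addr0.
by apply: good_involution_translate; rewrite addr0.
Qed.

Section Displacement.
Context {rho : I -> I}.
Hypothesis rho_good : good_involution (dih_op n) rho.
Let e x := (rho x - x)%R.

Lemma good_involution_disp2 x : (e x + e x = 0)%R.
Proof.
have [_ _ /(_ 0%R x)] := rho_good; rewrite /dih_op subr0 => /eqP.
by rewrite subr_eq0 => /eqP rho2; rewrite /e addrACA -opprD rho2 subrr.
Qed.

Lemma good_involution_disp_reflect x y : e (y + y - x)%R = e x.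
Proof.
have [_ rho_op _] := rho_good; rewrite /e [rho _]rho_op /dih_op.
rewrite opprB addrC addrA subrK; apply/esym/eqP.
by have /eqP := good_involution_disp2 x; rewrite addr_eq0 opprB.
Qed.

Lemma good_involution_odd_order : odd n.+1 -> rho =1 id.
Proof.
move=> odd_N x; have /eqP := double_eq0_odd odd_N (good_involution_disp2 x).
by rewrite subr_eq0 => /eqP.
Qed.

Lemma good_involution_even_order {m : nat} : n.+1 = m.*2 ->
  [\/ rho =1 id, rho =1 antipodal n m,
      rho =1 half_antipodal1 n m | rho =1 half_antipodal2 n m].
Proof.
move=> N_eq; have rhoE x : rho x = (x + e (inZp (odd x)))%R.
  by rewrite -(reflect_invariant_parity _ good_involution_disp_reflect) /e addrC subrK.
have [e0|e0] := double_eq0_even N_eq (good_involution_disp2 (inZp false));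
have [e1|e1] := double_eq0_even N_eq (good_involution_disp2 (inZp true)).
- by constructor 1 => x; rewrite rhoE; case: odd; rewrite ?e0 ?e1 addr0.
- by constructor 4 => x; rewrite rhoE /half_antipodal2; case: odd; rewrite ?e0 ?e1 ?addr0.
- by constructor 3 => x; rewrite rhoE /half_antipodal1; case: odd; rewrite ?e0 ?e1 ?addr0.
- by constructor 2 => x; rewrite rhoE /antipodal; case: odd; rewrite ?e0 ?e1.
Qed.

End Displacement.

Section HalfAntipodal.
Context {m : nat}.
Hypothesis N_eq : n.+1 = m.*2.

Lemma odd_half : odd (inZp m : I) = odd m.
Proof. by rewrite val_half. Qed.

Lemma odd_one : odd (inZp 1 : I).
Proof. by rewrite val_inZp_small //; move: N_eq; lia. Qed.

Lemma good_involution_antipodal : good_involution (dih_op n) (antipodal n m).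
Proof. exact/good_involution_translate/double_half. Qed.

Lemma good_involution_parity_shift {e0 e1 : I} :
  (e0 + e0 = 0)%R -> (e1 + e1 = 0)%R -> ~~ odd e0 -> ~~ odd e1 ->
  good_involution (dih_op n) (fun x => x + if odd x then e1 else e0)%R.
Proof.
have ev := even_order N_eq.
move=> e0_2 e1_2 e0_ev e1_ev; apply: good_involution_shift => [x | x y | x].
- by case: odd.
- by rewrite odd_reflectZp.
- by rewrite odd_addZp //; case: odd; rewrite ?(negbTE e0_ev) ?(negbTE e1_ev).
Qed.

Lemma half_antipodal_distinct :
  [/\ ~ (id =1 antipodal n m), ~ (id =1 half_antipodal1 n m)
     & ~ (id =1 half_antipodal2 n m)] /\
  [/\ ~ (antipodal n m =1 half_antipodal1 n m),
      ~ (antipodal n m =1 half_antipodal2 n m)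
    & ~ (half_antipodal1 n m =1 half_antipodal2 n m)].
Proof.
have shift0 := negbTE (addr_half_neq N_eq 0%R).
have shift1 := negbTE (addr_half_neq N_eq (inZp 1)).
rewrite /antipodal /half_antipodal1 /half_antipodal2.
split; split=> eq_maps;
  [ move: (eq_maps 0%R) | move: (eq_maps 0%R) | move: (eq_maps (inZp 1))
  | move: (eq_maps (inZp 1)) | move: (eq_maps 0%R) | move: (eq_maps 0%R) ];
  rewrite /= ?odd_one => /eqP; by rewrite ?shift0 ?shift1 // eq_sym ?shift0 ?shift1.
Qed.

(* For odd m, adding m flips parity, so the mixed maps are not involutions. *)
Lemma half_antipodal1_not_good : odd m ->
  ~ good_involution (dih_op n) (half_antipodal1 n m).
Proof.
move=> m_odd [/(_ 0%R) + _ _]; rewrite /half_antipodal1.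
rewrite (_ : odd (0%R : I) = false) // add0r odd_half m_odd.
by apply/eqP; exact: half_neq0 N_eq.
Qed.

Lemma half_antipodal2_not_good : odd m ->
  ~ good_involution (dih_op n) (half_antipodal2 n m).
Proof.
move=> m_odd [/(_ (inZp 1)) + _ _]; rewrite /half_antipodal2 odd_one.
rewrite odd_addZp ?(even_order N_eq) // odd_one odd_half m_odd /=.
by apply/eqP; exact: addr_half_neq N_eq _.
Qed.

Hypothesis m_even : ~~ odd m.

Lemma good_involution_half_antipodal1 :
  good_involution (dih_op n) (half_antipodal1 n m).
Proof.
apply: (good_involution_ext _ (good_involution_parity_shift
          (double_half N_eq) (addr0 0%R) _ (isT : ~~ odd (0%R : I)))).
- by move=> x; rewrite /half_antipodal1; case: odd; rewrite ?addr0.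
- by rewrite odd_half.
Qed.

Lemma good_involution_half_antipodal2 :
  good_involution (dih_op n) (half_antipodal2 n m).
Proof.
apply: (good_involution_ext _ (good_involution_parity_shift
          (addr0 0%R) (double_half N_eq) (isT : ~~ odd (0%R : I)) _)).
- by move=> x; rewrite /half_antipodal2; case: odd; rewrite ?addr0.
- by rewrite odd_half.
Qed.

End HalfAntipodal.

End DihedralQuandle.

Theorem theorem3p2 (n : nat) :
  (odd n.+1 ->
     forall rho : 'I_n.+1 -> 'I_n.+1,
       good_involution (dih_op n) rho <-> rho =1 id)
  /\
  (forall m : nat, n.+1 = m.*2 -> odd m ->
     forall rho : 'I_n.+1 -> 'I_n.+1,
       good_involution (dih_op n) rho <->
       (rho =1 id \/ rho =1 antipodal n m))
  /\
  (forall m : nat, n.+1 = m.*2 -> ~~ odd m ->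
     (forall rho : 'I_n.+1 -> 'I_n.+1,
        good_involution (dih_op n) rho <->
        [\/ rho =1 id, rho =1 antipodal n m,
            rho =1 half_antipodal1 n m | rho =1 half_antipodal2 n m])
     /\
     ([/\ ~ (id =1 antipodal n m), ~ (id =1 half_antipodal1 n m)
        & ~ (id =1 half_antipodal2 n m)] /\
      [/\ ~ (antipodal n m =1 half_antipodal1 n m),
          ~ (antipodal n m =1 half_antipodal2 n m)
        & ~ (half_antipodal1 n m =1 half_antipodal2 n m)])).
Proof.
split; [|split].
- move=> odd_N rho; split=> [rho_good | eq_rho].
    exact: good_involution_odd_order.
  exact: good_involution_ext eq_rho good_involution_id.
- move=> m N_eq m_odd rho; split=> [rho_good | [] eq_rho].
    case: (good_involution_even_order rho_good N_eq) => eq_rho; [by left | by right | |].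
      by case: (half_antipodal1_not_good N_eq m_odd); exact: good_involution_ext (fsym eq_rho) rho_good.
    by case: (half_antipodal2_not_good N_eq m_odd); exact: good_involution_ext (fsym eq_rho) rho_good.
  + exact: good_involution_ext eq_rho good_involution_id.
  + exact: good_involution_ext eq_rho (good_involution_antipodal N_eq).
- move=> m N_eq m_even; split; last exact: half_antipodal_distinct.
  move=> rho; split=> [rho_good | ]; first exact: good_involution_even_order.
  case=> eq_rho; apply: (good_involution_ext eq_rho).
  + exact: good_involution_id.
  + exact: good_involution_antipodal.
  + exact: good_involution_half_antipodal1.
  + exact: good_involution_half_antipodal2.
Qed.
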